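(* Let $n\ge 1$ be odd. Consider the generalized $n$-gene repressilator system $$\dot r_i = a_i(p_{i-1}) - d_{r_i}(r_i),\qquad \dot p_i = k_i(r_i) - d_{p_i}(p_i),\qquad i=1,\dots,n,$$ (indices mod $n$, so $p_0=p_n$), where the functions satisfy the standing assumptions described in the context. Suppose that for every $i=1,\dots,n$, $$\delta_i^R > a_i(0)\quad\text{and}\quad \delta_i^P > k_i\big(d_{r_i}^{-1}(a_i(0))\big),$$ where $\delta_i^R:=\lim_{x\to\infty} d_{r_i}(x)$ and $\delta_i^P:=\lim_{x\to\infty} d_{p_i}(x)$ (these limits may be $+\infty$). Then the system has a unique steady state in $(0,\infty)^{2n}$.
   Context: Standing assumptions: each transcription-rate function $a_i:[0,\infty)\to\mathbb{R}$ is $C^1$, satisfies $a_i([0,\infty))\subset[0,\infty)$, is strictly decreasing on $[0,\infty)$, and has $a_i(0)>0$. Each degradation-rate function $d_{r_i}, d_{p_i}$ and each translation-rate function $k_i$ is a $C^1$ function $[0,\infty)\to\mathbb{R}$ that vanishes at $0$ and is strictly increasing on $(0,\infty)$; in particular these are invertible on their ranges. Here $r_i$ is the concentration of mRNA-$i$ and $p_i$ that of protein-$i$. *)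

From Stdlib Require Import Reals Lra Arith.
From Coquelicot Require Import Coquelicot.
Open Scope R_scope.

Definition C1_nonneg (f : R -> R) : Prop :=
  exists g : R -> R,
    (forall x, 0 < x -> is_derive f x (g x)) /\
    filterlim (fun h => (f h - f 0) / h) (at_right 0) (locally (g 0)) /\
    (forall x, 0 < x -> continuous g x) /\
    filterlim g (at_right 0) (locally (g 0)).

Definition transcription_fn (f : R -> R) : Prop :=
  C1_nonneg f /\
  (forall x, 0 <= x -> 0 <= f x) /\
  (forall x y, 0 <= x -> x < y -> f y < f x) /\
  0 < f 0.

Definition rate_fn (f : R -> R) : Prop :=
  C1_nonneg f /\
  f 0 = 0 /\
  (forall x y, 0 < x -> x < y -> f x < f y).

(* Index of the predecessor gene modulo n (0-based: genes 0..n-1, pred 0 = n-1). *)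
Definition prev (n i : nat) : nat := (i + n - 1) mod n.

Definition steady_state (n : nat) (a dr k dp : nat -> R -> R)
  (r p : nat -> R) : Prop :=
  forall i, (i < n)%nat ->
    a i (p (prev n i)) - dr i (r i) = 0 /\ k i (r i) - dp i (p i) = 0.

Definition positive_state (n : nat) (r p : nat -> R) : Prop :=
  forall i, (i < n)%nat -> 0 < r i /\ 0 < p i.

From Stdlib Require Import Reals Lra Lia ClassicalEpsilon.
From Coquelicot Require Import Coquelicot.
Open Scope R_scope.

(* At steady state each gene acts as a response function: given the level x of its
   repressor, a(x) = dr(r) and k(r) = dp(p) have unique solutions r, p >= 0 (the limit
   hypotheses put a(x) and k(r) below the ranges' suprema, and the intermediate value
   theorem provides them), and the protein level p = F(x) is positive, continuous and
   strictly decreasing in x.  Steady states thus correspond to fixed points of the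
   composite of the n response functions around the cycle; for odd n this composite is
   strictly decreasing and nonnegative on [0, oo), so it has exactly one fixed point. *)

Definition continuous_nonneg (f : R -> R) : Prop :=
  forall x eps, 0 <= x -> 0 < eps -> exists delta, 0 < delta /\
    forall y, 0 <= y -> Rabs (y - x) < delta -> Rabs (f y - f x) < eps.

Definition increasing_nonneg (h : R -> R) : Prop :=
  forall x y, 0 <= x -> x < y -> h x < h y.

Lemma C1_nonneg_continuous f : C1_nonneg f -> continuous_nonneg f.
Proof.
  intros [g [Hderiv [Hquot _]]] x eps Hx Heps.
  destruct (Rle_lt_or_eq_dec 0 x Hx) as [Hxpos | <-].
  - assert (Hcont : continuous f x).
    { apply (ex_derive_continuous (K := R_AbsRing) (V := R_NormedModule)).
      exists (g x). apply Hderiv, Hxpos. }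
    destruct (Hcont (ball (f x) eps)) as [d Hd]; [exists (mkposreal _ Heps); auto |].
    exists d; split; [apply cond_pos | intros y _ Hy; exact (Hd y Hy)].
  - (* |f y - f 0| <= y (|g 0| + 1) once the difference quotient is within 1 of g 0 *)
    destruct (Hquot (ball (g 0) 1)) as [d Hd]; [exists (mkposreal 1 Rlt_0_1); auto |].
    set (C := Rabs (g 0) + 1).
    assert (HC : 0 < C) by (pose proof (Rabs_pos (g 0)); unfold C; lra).
    exists (Rmin d (eps / C)).
    split; [apply Rmin_pos; [apply cond_pos | apply Rdiv_lt_0_compat; lra] |].
    intros y Hy Hyd.
    rewrite Rminus_0_r, Rabs_pos_eq in Hyd by lra.
    destruct (Rle_lt_or_eq_dec 0 y Hy) as [Hypos | <-];
      [| rewrite Rminus_diag, Rabs_R0; lra].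
    assert (Hq : Rabs ((f y - f 0) / y - g 0) < 1).
    { apply (Hd y); [| exact Hypos]. change (Rabs (y - 0) < d).
      rewrite Rminus_0_r, Rabs_pos_eq by lra.
      eapply Rlt_le_trans; [exact Hyd | apply Rmin_l]. }
    assert (Hqb : Rabs ((f y - f 0) / y) < C).
    { pose proof (Rabs_triang_inv ((f y - f 0) / y) (g 0)). unfold C; lra. }
    assert (Hyb : y * C < eps)
      by (apply Rlt_div_r; [exact HC | eapply Rlt_le_trans; [exact Hyd | apply Rmin_r]]).
    replace (f y - f 0) with (y * ((f y - f 0) / y)) by (field; lra).
    rewrite Rabs_mult, (Rabs_pos_eq y) by lra.
    apply Rle_lt_trans with (y * C); [apply Rmult_le_compat_l; lra | exact Hyb].
Qed.

Lemma continuous_nonneg_comp f g : continuous_nonneg f -> continuous_nonneg g ->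
  (forall x, 0 <= x -> 0 <= g x) -> continuous_nonneg (fun x => f (g x)).
Proof.
  intros Hf Hg Hpos x eps Hx Heps.
  destruct (Hf (g x) eps (Hpos x Hx) Heps) as [d1 [Hd1 H1]].
  destruct (Hg x d1 Hx Hd1) as [d2 [Hd2 H2]].
  exists d2; split; [exact Hd2 | intros y Hy Hyx; apply H1; auto].
Qed.

Lemma continuous_nonneg_extend f : continuous_nonneg f -> continuity (fun x => f (Rmax 0 x)).
Proof.
  intros Hf x eps Heps.
  destruct (Hf (Rmax 0 x) eps (Rmax_l 0 x) Heps) as [d [Hd Hdd]].
  exists d; split; [exact Hd |]. intros y [_ Hy]. simpl in *. unfold R_dist in *.
  apply Hdd; [apply Rmax_l |].
  apply Rle_lt_trans with (Rabs (y - x)); [| exact Hy].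
  unfold Rmax; destruct (Rle_dec 0 y), (Rle_dec 0 x); unfold Rabs;
    repeat destruct Rcase_abs; lra.
Qed.

Lemma IVT_nonneg f g b : continuous_nonneg f -> continuous_nonneg g -> 0 <= b ->
  f 0 <= g 0 -> g b <= f b -> exists z, 0 <= z <= b /\ f z = g z.
Proof.
  intros Hf Hg Hb H0 Hbb.
  assert (Hc : continuity (fun x => f (Rmax 0 x) - g (Rmax 0 x)))
    by (apply continuity_minus; apply continuous_nonneg_extend; assumption).
  destruct (IVT_cor _ 0 b Hc Hb) as [z [Hz Ez]].
  - rewrite Rmax_left, Rmax_right by lra.
    assert (0 <= (g 0 - f 0) * (f b - g b)) by (apply Rmult_le_pos; lra). nra.
  - exists z; split; [exact Hz |]. rewrite Rmax_right in Ez by lra. lra.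
Qed.

Section Increasing.
Variable h : R -> R.
Hypothesis Hh : increasing_nonneg h.

Lemma increasing_nonneg_le x y : 0 <= x -> x <= y -> h x <= h y.
Proof.
  intros Hx Hxy. destruct (Rle_lt_or_eq_dec _ _ Hxy) as [H | <-]; [left; apply Hh |]; lra.
Qed.

Lemma increasing_nonneg_lt_inv x y : 0 <= x -> 0 <= y -> h x < h y -> x < y.
Proof.
  intros Hx Hy Hlt. destruct (Rlt_or_le x y) as [H | H]; [exact H |].
  pose proof (increasing_nonneg_le y x Hy H). lra.
Qed.

Lemma increasing_nonneg_inj x y : 0 <= x -> 0 <= y -> h x = h y -> x = y.
Proof.
  intros Hx Hy E. destruct (Rtotal_order x y) as [H | [H | H]]; [| exact H |].
  - pose proof (Hh _ _ Hx H); lra.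
  - pose proof (Hh _ _ Hy H); lra.
Qed.

Lemma increasing_nonneg_solution_continuous phi psi : continuous_nonneg phi ->
  (forall x, 0 <= x -> 0 <= psi x /\ h (psi x) = phi x) -> continuous_nonneg psi.
Proof.
  intros Hphi Hpsi x eps Hx Heps.
  destruct (Hpsi x Hx) as [Hpx Ex].
  assert (Hup : h (psi x) < h (psi x + eps / 2)) by (apply Hh; lra).
  destruct (Hphi x (h (psi x + eps / 2) - h (psi x)) Hx) as [d1 [Hd1 H1]]; [lra |].
  assert (Hlow : exists d2, 0 < d2 /\ forall y, 0 <= y -> Rabs (y - x) < d2 ->
                   psi x - eps / 2 < psi y).
  { destruct (Rle_or_lt 0 (psi x - eps / 2)) as [Hl | Hl].
    - assert (Hdown : h (psi x - eps / 2) < h (psi x)) by (apply Hh; lra).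
      destruct (Hphi x (h (psi x) - h (psi x - eps / 2)) Hx) as [d2 [Hd2 H2]]; [lra |].
      exists d2; split; [exact Hd2 |]. intros y Hy Hyx.
      specialize (H2 y Hy Hyx). destruct (Hpsi y Hy) as [Hpy Ey].
      rewrite <- Ey, <- Ex in H2.
      apply increasing_nonneg_lt_inv; [exact Hl | exact Hpy |].
      apply Rabs_def2 in H2. lra.
    - exists 1; split; [lra |]. intros y Hy _. pose proof (proj1 (Hpsi y Hy)). lra. }
  destruct Hlow as [d2 [Hd2 H2]].
  exists (Rmin d1 d2); split; [apply Rmin_pos; assumption |]. intros y Hy Hyx.
  assert (Hlt : psi y < psi x + eps / 2).
  { specialize (H1 y Hy (Rlt_le_trans _ _ _ Hyx (Rmin_l _ _))).
    destruct (Hpsi y Hy) as [Hpy Ey]. rewrite <- Ey, <- Ex in H1.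
    apply increasing_nonneg_lt_inv; [exact Hpy | lra |]. apply Rabs_def2 in H1. lra. }
  specialize (H2 y Hy (Rlt_le_trans _ _ _ Hyx (Rmin_r _ _))).
  apply Rabs_def1; lra.
Qed.

Hypothesis Hcont : continuous_nonneg h.
Hypothesis Hh0 : h 0 = 0.

Lemma increasing_nonneg_solve L phi : is_lim h p_infty L -> continuous_nonneg phi ->
  (forall x, 0 <= x -> 0 <= phi x /\ Rbar_lt (phi x) L) ->
  exists psi, continuous_nonneg psi /\ forall x, 0 <= x -> 0 <= psi x /\ h (psi x) = phi x.
Proof.
  intros Hlim Hphi Hrange.
  assert (Hsol : forall x, exists y, 0 <= x -> 0 <= y /\ h y = phi x).
  { intro x. destruct (Rle_or_lt 0 x) as [Hx | Hx]; [| exists 0; lra].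
    destruct (Hrange x Hx) as [Hphi0 HphiL].
    destruct (Hlim _ (open_Rbar_gt' L (phi x) HphiL)) as [M HM].
    set (b := Rmax M 0 + 1).
    assert (Hb : M < b /\ 0 < b)
      by (pose proof (Rmax_l M 0); pose proof (Rmax_r M 0); unfold b; lra).
    assert (Hhb : phi x < h b) by exact (HM b (proj1 Hb)).
    destruct (IVT_nonneg h (fun _ => phi x) b Hcont) as [y [Hy Ey]]; try lra.
    - intros ? ? _ ?. exists 1.
      split; [lra | intros; rewrite Rminus_diag, Rabs_R0; assumption].
    - exists y. intros _. split; [lra | exact Ey]. }
  destruct (choice _ Hsol) as [psi Hpsi].
  exists psi; split; [| exact Hpsi].
  apply (increasing_nonneg_solution_continuous phi psi Hphi Hpsi).
Qed.

End Increasing.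

Lemma rate_fn_pos h : rate_fn h -> forall y, 0 < y -> 0 < h y.
Proof.
  intros [HC1 [H0 Hinc]] y Hy.
  assert (Hmid : 0 <= h (y / 2)).
  { (* else continuity at 0 with [h 0 = 0] gives a small [t] with [h (y/2) < h t] *)
    destruct (Rle_or_lt 0 (h (y / 2))) as [Hle | Hneg]; [exact Hle |].
    destruct (C1_nonneg_continuous h HC1 0 (- h (y / 2))) as [d [Hd Hdd]]; [lra | lra |].
    set (t := Rmin (d / 2) (y / 4)).
    assert (Ht : 0 < t <= d / 2 /\ t <= y / 4)
      by (unfold t; repeat split; [apply Rmin_pos; lra | apply Rmin_l | apply Rmin_r]).
    specialize (Hdd t ltac:(lra)). rewrite H0, !Rminus_0_r, Rabs_pos_eq in Hdd by lra.
    specialize (Hdd ltac:(lra)).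
    pose proof (Hinc t (y / 2) ltac:(lra) ltac:(lra)).
    apply Rabs_def2 in Hdd. lra. }
  pose proof (Hinc (y / 2) y ltac:(lra) ltac:(lra)). lra.
Qed.

Lemma rate_fn_increasing h : rate_fn h -> increasing_nonneg h.
Proof.
  intros Hrate x y Hx Hxy. destruct (Rle_lt_or_eq_dec 0 x Hx) as [Hxpos | <-].
  - apply Hrate; assumption.
  - rewrite (proj1 (proj2 Hrate)). apply rate_fn_pos; assumption.
Qed.

Lemma rate_fn_solve_decreasing d L phi : rate_fn d -> is_lim d p_infty L ->
  continuous_nonneg phi -> (forall x, 0 <= x -> 0 < phi x) ->
  (forall x y, 0 <= x -> x < y -> phi y < phi x) -> Rbar_lt (Finite (phi 0)) L ->
  exists psi, continuous_nonneg psi /\ (forall x y, 0 <= x -> x < y -> psi y < psi x) /\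
    forall x, 0 <= x -> 0 < psi x /\ forall y, 0 <= y -> (phi x = d y <-> y = psi x).
Proof.
  intros Hd Hlim Hphi Hpos Hdec HL.
  pose proof (rate_fn_increasing d Hd) as Id.
  destruct (increasing_nonneg_solve d Id (C1_nonneg_continuous d (proj1 Hd))
              (proj1 (proj2 Hd)) L phi Hlim Hphi) as [psi [Cpsi Hpsi]].
  { intros x Hx. split; [left; apply Hpos, Hx |].
    apply Rbar_le_lt_trans with (phi 0); [| exact HL].
    destruct (Rle_lt_or_eq_dec 0 x Hx) as [H | <-]; [left; apply Hdec | right]; lra. }
  exists psi. split; [exact Cpsi | split].
  - intros x y Hx Hxy.
    apply (increasing_nonneg_lt_inv d Id); [apply Hpsi; lra | apply Hpsi, Hx |].
    rewrite (proj2 (Hpsi x Hx)), (proj2 (Hpsi y ltac:(lra))). apply Hdec; assumption.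
  - intros x Hx. destruct (Hpsi x Hx) as [Hpsi0 E]. split.
    + destruct (Rle_lt_or_eq_dec 0 _ Hpsi0) as [H | H]; [exact H |].
      rewrite <- H, (proj1 (proj2 Hd)) in E. pose proof (Hpos x Hx). lra.
    + intros y Hy. split.
      * intros Ey. apply (increasing_nonneg_inj d Id); [exact Hy | exact Hpsi0 | lra].
      * intros ->. symmetry. exact E.
Qed.

(* [mrna x] and [prot x] are the steady levels of a gene whose repressor is held at [x]. *)
Definition gene_response (a dr k dp mrna prot : R -> R) : Prop :=
  continuous_nonneg prot /\
  (forall x y, 0 <= x -> x < y -> prot y < prot x) /\
  forall x, 0 <= x -> 0 < mrna x /\ 0 < prot x /\
    forall r p, 0 <= r -> 0 <= p ->
      (a x = dr r /\ k r = dp p <-> r = mrna x /\ p = prot x).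

Lemma exists_gene_response a dr k dp dR dP :
  transcription_fn a -> rate_fn dr -> rate_fn k -> rate_fn dp ->
  is_lim dr p_infty dR -> is_lim dp p_infty dP ->
  Rbar_lt (Finite (a 0)) dR ->
  (forall x, 0 <= x -> dr x = a 0 -> Rbar_lt (Finite (k x)) dP) ->
  exists mrna prot, gene_response a dr k dp mrna prot.
Proof.
  intros [HaC1 [Ha_nonneg [Ha_dec _]]] Hdr Hk Hdp HlimR HlimP HR HP.
  assert (Ha_pos : forall x, 0 <= x -> 0 < a x).
  { intros x Hx. pose proof (Ha_dec x (x + 1) Hx ltac:(lra)).
    pose proof (Ha_nonneg (x + 1) ltac:(lra)). lra. }
  destruct (rate_fn_solve_decreasing dr dR a Hdr HlimR (C1_nonneg_continuous a HaC1)
              Ha_pos Ha_dec HR) as [mrna [Cm [Dm Hm]]].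
  destruct (rate_fn_solve_decreasing dp dP (fun x => k (mrna x)) Hdp HlimP)
    as [prot [Cp [Dp Hp]]].
  - apply continuous_nonneg_comp; [apply C1_nonneg_continuous, Hk | exact Cm |].
    intros x Hx. left. apply Hm, Hx.
  - intros x Hx. apply (rate_fn_pos k Hk), Hm, Hx.
  - intros x y Hx Hxy.
    apply (rate_fn_increasing k Hk); [left; apply Hm; lra | apply Dm; assumption].
  - apply HP; [left; apply Hm, Rle_refl |].
    symmetry. apply (Hm 0 (Rle_refl 0)); [left; apply Hm, Rle_refl | reflexivity].
  - exists mrna, prot. split; [exact Cp | split; [exact Dp |]].
    intros x Hx. destruct (Hm x Hx) as [Hm_pos Hm_iff], (Hp x Hx) as [Hp_pos Hp_iff].
    split; [exact Hm_pos | split; [exact Hp_pos |]]. intros r p Hr Hp0. split.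
    + intros [E1 E2]. apply (Hm_iff r Hr) in E1. subst r.
      split; [reflexivity | apply (Hp_iff p Hp0), E2].
    + intros [-> ->]. split; [apply (Hm_iff _ Hr) | apply (Hp_iff _ Hp0)]; reflexivity.
Qed.

Lemma decreasing_fixpoint_unique G : continuous_nonneg G ->
  (forall x, 0 <= x -> 0 <= G x) -> (forall x y, 0 <= x -> x < y -> G y < G x) ->
  exists z, 0 <= z /\ G z = z /\ forall y, 0 <= y -> G y = y -> y = z.
Proof.
  intros HG Hnonneg Hdec.
  assert (Hb : 0 <= G 0) by (apply Hnonneg, Rle_refl).
  assert (HGb : G (G 0) <= G 0).
  { destruct (Rle_lt_or_eq_dec 0 (G 0) Hb) as [H | H];
      [left; apply Hdec | rewrite <- H]; lra. }
  destruct (IVT_nonneg (fun x => x) G (G 0)) as [z [Hz Ez]]; try assumption.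
  - intros x eps _ Heps. exists eps. split; [exact Heps | intros; assumption].
  - exists z. split; [lra | split; [symmetry; exact Ez |]].
    intros y Hy Ey. destruct (Rtotal_order y z) as [H | [H | H]]; [| exact H |].
    + pose proof (Hdec y z Hy H). lra.
    + pose proof (Hdec z y ltac:(lra) H). lra.
Qed.

Fixpoint chain (F : nat -> R -> R) (m : nat) (x : R) : R :=
  match m with O => x | S m' => F m' (chain F m' x) end.

Section Chain.
Variables (n : nat) (F : nat -> R -> R).
Hypothesis HFpos : forall i x, (i < n)%nat -> 0 <= x -> 0 < F i x.
Hypothesis HFcont : forall i, (i < n)%nat -> continuous_nonneg (F i).
Hypothesis HFdec : forall i x y, (i < n)%nat -> 0 <= x -> x < y -> F i y < F i x.

Lemma chain_nonneg m x : (m <= n)%nat -> 0 <= x -> 0 <= chain F m x.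
Proof.
  induction m as [| m IH]; intros Hm Hx; simpl; [exact Hx |].
  left. apply HFpos; [lia | apply IH; [lia | exact Hx]].
Qed.

Lemma chain_continuous m : (m <= n)%nat -> continuous_nonneg (chain F m).
Proof.
  induction m as [| m IH]; intros Hm; simpl.
  - intros x eps _ Heps. exists eps. split; [exact Heps | intros; assumption].
  - apply continuous_nonneg_comp; [apply HFcont; lia | apply IH; lia |].
    intros; apply chain_nonneg; [lia | assumption].
Qed.

Lemma chain_monotone m x y : (m <= n)%nat -> 0 <= x -> x < y ->
  if Nat.even m then chain F m x < chain F m y else chain F m y < chain F m x.
Proof.
  induction m as [| m IH]; intros Hm Hx Hxy; [exact Hxy |].
  specialize (IH ltac:(lia) Hx Hxy). cbn [chain]. rewrite Nat.even_succ, <- Nat.negb_even.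
  assert (Hcx : 0 <= chain F m x) by (apply chain_nonneg; [lia | lra]).
  assert (Hcy : 0 <= chain F m y) by (apply chain_nonneg; [lia | lra]).
  destruct (Nat.even m); simpl; apply HFdec; assumption || lia.
Qed.

End Chain.

Lemma prev_0 n : (1 <= n)%nat -> prev n 0 = (n - 1)%nat.
Proof. intros. unfold prev. symmetry. apply (Nat.mod_unique _ _ 0); lia. Qed.

Lemma prev_S n i : (S i < n)%nat -> prev n (S i) = i.
Proof. intros. unfold prev. symmetry. apply (Nat.mod_unique _ _ 1); lia. Qed.

Lemma prev_lt n i : (1 <= n)%nat -> (prev n i < n)%nat.
Proof. intros. unfold prev. apply Nat.mod_upper_bound. lia. Qed.

Section Repressilator.
Variables (n : nat) (a dr k dp mrna prot : nat -> R -> R).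
Hypothesis Hn1 : (1 <= n)%nat.
Hypothesis Hresp : forall i, (i < n)%nat ->
  gene_response (a i) (dr i) (k i) (dp i) (mrna i) (prot i).

Lemma steady_state_iff_response r p : positive_state n r p ->
  steady_state n a dr k dp r p <->
  forall i, (i < n)%nat -> r i = mrna i (p (prev n i)) /\ p i = prot i (p (prev n i)).
Proof.
  intros Hpos. split; intros H i Hi;
    assert (Hprev : (prev n i < n)%nat) by (apply prev_lt, Hn1);
    destruct (Hresp i Hi) as [_ [_ Hgene]];
    destruct (Hgene (p (prev n i))) as [_ [_ Hiff]]; try (left; apply Hpos, Hprev);
    specialize (Hiff (r i) (p i) ltac:(left; apply Hpos, Hi) ltac:(left; apply Hpos, Hi));
    specialize (H i Hi).
  - apply Hiff. lra.
  - apply Hiff in H. lra.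
Qed.

Lemma response_cycle_chain p : (forall i, (i < n)%nat -> p i = prot i (p (prev n i))) ->
  forall i, (i < n)%nat -> p i = chain prot (S i) (p (n - 1)%nat).
Proof.
  intros Hcycle i. induction i as [| i IH]; intros Hi.
  - rewrite Hcycle, prev_0 by assumption. reflexivity.
  - rewrite Hcycle, prev_S, IH by lia. reflexivity.
Qed.

Lemma chain_fixpoint_cycle z : chain prot n z = z ->
  forall i, (i < n)%nat -> chain prot (S i) z = prot i (chain prot (S (prev n i)) z).
Proof.
  intros Hfix [| i] Hi.
  - rewrite prev_0, Nat.sub_1_r, Nat.succ_pred_pos, Hfix by lia. reflexivity.
  - rewrite prev_S by lia. reflexivity.
Qed.

Hypothesis Hodd : Nat.odd n = true.

Lemma unique_positive_steady_state : exists r p : nat -> R,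
  positive_state n r p /\ steady_state n a dr k dp r p /\
  forall r' p' : nat -> R,
    positive_state n r' p' -> steady_state n a dr k dp r' p' ->
    forall i, (i < n)%nat -> r' i = r i /\ p' i = p i.
Proof.
  assert (Hprot_pos : forall i x, (i < n)%nat -> 0 <= x -> 0 < prot i x)
    by (intros i x Hi Hx; apply (Hresp i Hi), Hx).
  assert (Hprot_cont : forall i, (i < n)%nat -> continuous_nonneg (prot i))
    by (intros i Hi; apply (Hresp i Hi)).
  assert (Hprot_dec : forall i x y, (i < n)%nat -> 0 <= x -> x < y -> prot i y < prot i x)
    by (intros i x y Hi; apply (Hresp i Hi)).
  (* an odd number of decreasing responses composes to a decreasing map *)
  assert (Hdec : forall x y, 0 <= x -> x < y -> chain prot n y < chain prot n x).
  { intros x y Hx Hxy.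
    pose proof (chain_monotone n prot Hprot_pos Hprot_dec n x y (le_n n) Hx Hxy) as H.
    rewrite <- Nat.negb_odd, Hodd in H. exact H. }
  destruct (decreasing_fixpoint_unique (chain prot n)) as [z [Hz [Hfix Huniq]]];
    [apply (chain_continuous n); auto | intros; apply (chain_nonneg n); auto | exact Hdec |].
  set (p i := chain prot (S i) z).
  set (r i := mrna i (p (prev n i))).
  assert (Hp_pos : forall i, (i < n)%nat -> 0 < p i)
    by (intros i Hi; apply Hprot_pos, (chain_nonneg n); auto; lia).
  assert (Hpos : positive_state n r p).
  { intros i Hi. split; [| apply Hp_pos, Hi].
    apply (Hresp i Hi). left. apply Hp_pos, prev_lt, Hn1. }
  exists r, p. split; [exact Hpos | split].
  - apply steady_state_iff_response; [exact Hpos |]. intros i Hi.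
    split; [reflexivity | apply chain_fixpoint_cycle; assumption].
  - intros r' p' Hpos' Hsteady' i Hi.
    pose proof (proj1 (steady_state_iff_response r' p' Hpos') Hsteady') as Hresp'.
    assert (Hchain := response_cycle_chain p' (fun j Hj => proj2 (Hresp' j Hj))).
    assert (Hlast : p' (n - 1)%nat = z).
    { apply Huniq; [left; apply Hpos'; lia |].
      rewrite (Hchain (n - 1)%nat) at 2 by lia. f_equal. lia. }
    assert (Ep : forall j, (j < n)%nat -> p' j = p j)
      by (intros j Hj; rewrite Hchain, Hlast by exact Hj; reflexivity).
    split; [| apply Ep, Hi].
    rewrite (proj1 (Hresp' i Hi)), Ep by (apply prev_lt, Hn1). reflexivity.
Qed.

End Repressilator.

Theorem proposition1
  (n : nat) (Hn1 : (1 <= n)%nat) (Hodd : Nat.odd n = true)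
  (a dr k dp : nat -> R -> R)
  (deltaR deltaP : nat -> Rbar)
  (Ha : forall i, (i < n)%nat -> transcription_fn (a i))
  (Hdr : forall i, (i < n)%nat -> rate_fn (dr i))
  (Hk : forall i, (i < n)%nat -> rate_fn (k i))
  (Hdp : forall i, (i < n)%nat -> rate_fn (dp i))
  (HlimR : forall i, (i < n)%nat -> is_lim (dr i) p_infty (deltaR i))
  (HlimP : forall i, (i < n)%nat -> is_lim (dp i) p_infty (deltaP i))
  (HR : forall i, (i < n)%nat -> Rbar_lt (Finite (a i 0)) (deltaR i))
  (HP : forall i, (i < n)%nat -> forall x, 0 <= x -> dr i x = a i 0 ->
          Rbar_lt (Finite (k i x)) (deltaP i)) :
  exists r p : nat -> R,
    positive_state n r p /\ steady_state n a dr k dp r p /\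
    forall r' p' : nat -> R,
      positive_state n r' p' -> steady_state n a dr k dp r' p' ->
      forall i, (i < n)%nat -> r' i = r i /\ p' i = p i.
Proof.
  assert (Hgenes : forall i, exists mp : (R -> R) * (R -> R), (i < n)%nat ->
            gene_response (a i) (dr i) (k i) (dp i) (fst mp) (snd mp)).
  { intro i. destruct (Nat.lt_ge_cases i n) as [Hi | Hi]; [| exists (id, id); lia].
    destruct (exists_gene_response (a i) (dr i) (k i) (dp i) (deltaR i) (deltaP i))
      as [mrna [prot Hresp]]; auto.
    exists (mrna, prot). intros _. exact Hresp. }
  destruct (choice _ Hgenes) as [mp Hmp].
  exact (unique_positive_steady_state n a dr k dp (fun i => fst (mp i)) (fun i => snd (mp i))
           Hn1 Hmp Hodd).
Qed.
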